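(* Let $q$ be an odd prime power and let $f$ be a planar function on $\mathbb F_{q^2}$. Let $\{g_a : a\in\mathbb F_{q^2}\}$ be a family of injections $g_a:\mathbb F_q\to\mathbb F_{q^2}$. Put \[\mathcal U_g:=\{(x,g_x(t)) : x\in\mathbb F_{q^2},\ t\in\mathbb F_q\}\cup\{(\infty)\}.\] If for every $a,b\in\mathbb F_{q^2}$ the number of pairs $(x,t)\in\mathbb F_{q^2}\times\mathbb F_q$ with $f(x+a)-b-g_x(t)=0$ is either $1$ or $q+1$, then $\mathcal U_g$ is a unital in $\Pi(f)$.
   Context: A function $f:\mathbb F_{q^2}\to\mathbb F_{q^2}$ is planar if for every $a\neq 0$ the map $x\mapsto f(x+a)-f(x)$ is a bijection of $\mathbb F_{q^2}$. For planar $f$, the projective plane $\Pi(f)$ has as points the affine points $(x,y)\in\mathbb F_{q^2}\times\mathbb F_{q^2}$ and the points $(a)$ for $a\in\mathbb F_{q^2}\cup\{\infty\}$; its lines are $L_{a,b}=\{(x,f(x+a)-b):x\in\mathbb F_{q^2}\}\cup\{(a)\}$ for $a,b\in\mathbb F_{q^2}$, $N_a=\{(a,y):y\in\mathbb F_{q^2}\}\cup\{(\infty)\}$ for $a\in\mathbb F_{q^2}$, and $L_\infty=\{(a):a\in\mathbb F_{q^2}\cup\{\infty\}\}$; incidence is membership. A unital in $\Pi(f)$ is a set of $q^3+1$ points such that every line of $\Pi(f)$ meets it in exactly $1$ or exactly $q+1$ points. *)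

From HB Require Import structures.
From mathcomp Require Import all_boot all_order all_algebra all_field.
Set Implicit Arguments. Unset Strict Implicit. Unset Printing Implicit Defensive.
Import GRing.Theory.
Local Open Scope ring_scope.

Definition planar (L : finFieldType) (f : L -> L) : Prop :=
  forall a : L, a != 0 -> bijective (fun x => f (x + a) - f x).

(* Points of Pi(f): inl (x,y) = affine point (x,y);
   inr (Some a) = point (a); inr None = point (infinity). *)
Definition ppoint (L : finFieldType) := ((L * L) + option L)%type.

(* Lines of Pi(f): inl (a,b) = L_{a,b}; inr (Some a) = N_a; inr None = L_infinity. *)
Definition pline (L : finFieldType) := ((L * L) + option L)%type.

Definition incident (L : finFieldType) (f : L -> L) (P : ppoint L) (l : pline L)
  : bool :=
  match l, P with
  | inl (a, b), inl (x, y) => y == f (x + a) - b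
  | inl (a, b), inr (Some c) => c == a
  | inl _, inr None => false
  | inr (Some a), inl (x, _) => x == a
  | inr (Some _), inr (Some _) => false
  | inr (Some _), inr None => true
  | inr None, inl _ => false
  | inr None, inr _ => true
  end.

Definition is_unital (L : finFieldType) (f : L -> L) (q : nat) (U : {set ppoint L})
  : Prop :=
  #|U| = (q ^ 3 + 1)%N /\
  forall l : pline L,
    #|[set P in U | incident f P l]| = 1%N \/
    #|[set P in U | incident f P l]| = q.+1.

Definition Ug (K L : finFieldType) (g : L -> K -> L) : {set ppoint L} :=
  [set P : ppoint L | match P with
                      | inl (x, y) => [exists t : K, y == g x t]
                      | inr None => true
                      | inr (Some _) => false
                      end].

From HB Require Import structures.
From mathcomp Require Import all_boot all_order all_algebra all_field.
Set Implicit Arguments. Unset Strict Implicit. Unset Printing Implicit Defensive.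
Import GRing.Theory.
Local Open Scope ring_scope.

(* Every point of U_g other than (infinity) is (x, g_x(t)) for exactly one pair
   (x, t), because each g_x is injective.  So a line meets U_g in
   [(infinity) on the line] plus the number of pairs (x, t) whose point lies on
   it: for L_{a,b} these are the solutions of f(x + a) - b = g_x(t), counted by
   hypothesis; for N_a they are the q pairs (a, t); for L_infinity there are
   none. *)

Lemma card_fst_fiber (T1 T2 : finType) (a : T1) :
  #|[set xt : T1 * T2 | xt.1 == a]| = #|T2|.
Proof.
have -> : [set xt : T1 * T2 | xt.1 == a] = setX [set a] setT.
  by apply/setP => -[x t]; rewrite !inE andbT.
by rewrite cardsX cards1 cardsT mul1n.
Qed.

Section UnitalOfGraphs.

Variables (K L : finFieldType) (g : L -> K -> L).
Hypothesis g_inj : forall a : L, injective (g a).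

Definition graph_point (xt : L * K) : ppoint L := inl (xt.1, g xt.1 xt.2).

Lemma graph_point_inj : injective graph_point.
Proof. by move=> [x1 t1] [x2 t2] [ex]; subst x2 => /g_inj ->. Qed.

Lemma infinity_notin_graph_points (A : {set L * K}) :
  (inr None : ppoint L) \notin graph_point @: A.
Proof. by apply/imsetP => -[]. Qed.

Lemma card_graph_points (A : {set L * K}) : #|graph_point @: A| = #|A|.
Proof. exact/card_imset/graph_point_inj. Qed.

Lemma Ug_graph_points : Ug g = inr None |: graph_point @: setT.
Proof.
apply/setP => -[[x y]|[c|]]; rewrite !inE /=.
- apply/existsP/imsetP => [[t /eqP ->]|[[x' t] _ [-> ->]]].
    by exists (x, t).
  by exists t.
- by apply/esym/negbTE/imsetP => -[].
- by [].
Qed.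

Lemma card_Ug : #|Ug g| = (#|L| * #|K|).+1.
Proof.
rewrite Ug_graph_points cardsU1 (negbTE (infinity_notin_graph_points _)).
by rewrite card_graph_points cardsT card_prod.
Qed.

Lemma Ug_meet_line (f : L -> L) (l : pline L) :
  [set P in Ug g | incident f P l] =
  [set P in [set inr None] | incident f P l] :|:
  graph_point @: [set xt | incident f (graph_point xt) l].
Proof.
apply/setP => P; rewrite Ug_graph_points !inE; case: eqP => [->|_] /=.
  by rewrite (negbTE (infinity_notin_graph_points _)) orbF.
apply/andP/imsetP => [[/imsetP [xt _ ->] lxt]|[xt + ->]].
  by exists xt; rewrite ?inE.
by rewrite inE => lxt; split=> //; apply/imsetP; exists xt.
Qed.

Lemma card_Ug_meet_line (f : L -> L) (l : pline L) :
  #|[set P in Ug g | incident f P l]| =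
  (incident f (inr None) l + #|[set xt | incident f (graph_point xt) l]|)%N.
Proof.
rewrite Ug_meet_line; case: (boolP (incident f (inr None) l)) => linf /=.
  have -> : [set P in [set inr None] | incident f P l] = [set inr None].
    by apply/setP => P; rewrite !inE andb_idr // => /eqP ->.
  by rewrite cardsU1 (negbTE (infinity_notin_graph_points _)) card_graph_points.
have -> : [set P in [set inr None] | incident f P l] = set0.
  by apply/setP => P; rewrite !inE; apply/andP => -[/eqP ->]; apply/negP.
by rewrite set0U card_graph_points.
Qed.

End UnitalOfGraphs.

Theorem lemma2p1 (q : nat) (K L : finFieldType)
  (Hqpp : exists p k : nat, [/\ prime p, 0 < k & q = p ^ k]%N)
  (Hqodd : odd q)
  (HK : #|K| = q) (HL : #|L| = (q ^ 2)%N)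
  (f : L -> L) (Hf : planar f)
  (g : L -> K -> L) (Hg : forall a : L, injective (g a))
  (Hcount : forall a b : L,
      #|[set xt : L * K | f (xt.1 + a) - b - g xt.1 xt.2 == 0]| = 1%N \/
      #|[set xt : L * K | f (xt.1 + a) - b - g xt.1 xt.2 == 0]| = q.+1) :
  is_unital f q (Ug g).
Proof.
split; first by rewrite (card_Ug Hg) HL HK -expnSr addn1.
move=> [[a b]|[a|]]; rewrite (card_Ug_meet_line Hg) /=.
- have -> : [set xt | incident f (graph_point g xt) (inl (a, b))] =
            [set xt : L * K | f (xt.1 + a) - b - g xt.1 xt.2 == 0].
    by apply/setP => xt; rewrite !inE subr_eq0 eq_sym.
  exact: Hcount.
- by right; rewrite card_fst_fiber HK.
- by left; rewrite (_ : [set xt | _] = set0) ?cards0 //; apply/setP => xt; rewrite !inE.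
Qed.
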